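(* Let $m\in\{1,2\}$, $\gamma\in(\gamma_\star,\gamma_1]$ and $z\in(z_1,z_M]$. Then the continuation to the right, $C:[V_8,0)\to(0,\infty)$, of the local real-analytic solution through $P_8$ satisfies $C(V)<\sqrt{-V}$ for all $V\in(V_8,0)$; in particular $C(V)\to0$ as $V\to0^-$.
   Context: Fix $m\in\{1,2\}$. For $z>0$ put $\lambda=1+m\gamma z$, $a_1=1+\frac{m(\gamma-1)}{2}$, $a_2=\frac{m(\gamma-1)+mz\gamma(\gamma-3)}{2}$, $a_3=\frac{mz\gamma(\gamma-1)}{2}$, $G(V,C;\gamma,z)=C^2[(m+1)V+2mz]-V(1+V)(\lambda+V)$, $F(V,C;\gamma,z)=C\{C^2[1+\frac{mz}{1+V}]-a_1(1+V)^2+a_2(1+V)-a_3\}$; ODE $\frac{dC}{dV}=\frac FG$. $z_M=(\sqrt\gamma+\sqrt2)^{-2}$; $w(z)=\sqrt{1-2(\gamma+2)z+(\gamma-2)^2z^2}$, $V_8=\frac{-1+(\gamma-2)z+w}{2}$, $C_8=1+V_8$, $P_8=(V_8,C_8)$. The local solution is the real-analytic solution near $V_8$ with $C(V_8)=C_8$ and $C'(V_8)$ equal to the unique negative root of $-G_Cc^2+(F_C-G_V)c+F_V=0$ (partials at $P_8$); it extends as a positive decreasing solution on $[V_8,0)$. $z_1=\frac{\sqrt5-1}{2(1+\sqrt5+\gamma)}$, $\gamma_1=1+\sqrt2$, and $\gamma_\star\approx1.7$ is the value with $\frac{\sqrt{2\gamma(\gamma-1)}}{\gamma+1}=\sqrt{\frac{2\gamma}{(2+\sqrt{2\gamma})(\gamma+1)}}$.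 *)

From Stdlib Require Import Reals.
From Coquelicot Require Import Coquelicot.
Open Scope R_scope.

Definition lam (m g z : R) : R := 1 + m * g * z.
Definition a1 (m g : R) : R := 1 + m * (g - 1) / 2.
Definition a2 (m g z : R) : R := (m * (g - 1) + m * z * g * (g - 3)) / 2.
Definition a3 (m g z : R) : R := m * z * g * (g - 1) / 2.

Definition Gf (m g z V C : R) : R :=
  C ^ 2 * ((m + 1) * V + 2 * m * z) - V * (1 + V) * (lam m g z + V).

Definition Ff (m g z V C : R) : R :=
  C * (C ^ 2 * (1 + m * z / (1 + V)) - a1 m g * (1 + V) ^ 2
       + a2 m g z * (1 + V) - a3 m g z).

Definition zM (g : R) : R := / (sqrt g + sqrt 2) ^ 2.
Definition wf (g z : R) : R := sqrt (1 - 2 * (g + 2) * z + (g - 2) ^ 2 * z ^ 2).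
Definition V8 (g z : R) : R := (-1 + (g - 2) * z + wf g z) / 2.
Definition C8 (g z : R) : R := 1 + V8 g z.

Definition z1 (g : R) : R := (sqrt 5 - 1) / (2 * (1 + sqrt 5 + g)).
Definition gamma1 : R := 1 + sqrt 2.

(* gamma_star ~ 1.702: the root in (1,2) of the defining equation *)
Definition is_gamma_star (gs : R) : Prop :=
  1 < gs < 2 /\
  sqrt (2 * gs * (gs - 1)) / (gs + 1) =
  sqrt (2 * gs / ((2 + sqrt (2 * gs)) * (gs + 1))).

Definition G_V m g z := Derive (fun V => Gf m g z V (C8 g z)) (V8 g z).
Definition G_C m g z := Derive (fun C => Gf m g z (V8 g z) C) (C8 g z).
Definition F_V m g z := Derive (fun V => Ff m g z V (C8 g z)) (V8 g z).
Definition F_C m g z := Derive (fun C => Ff m g z (V8 g z) C) (C8 g z).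

(* the characteristic quadratic for the slope at P8 *)
Definition slope_quad (m g z c : R) : R :=
  - G_C m g z * c ^ 2 + (F_C m g z - G_V m g z) * c + F_V m g z.

Definition real_analytic_at (f : R -> R) (x0 : R) : Prop :=
  exists (a : nat -> R) (r : R), 0 < r /\
    forall x, Rabs (x - x0) < r -> is_pseries a (x - x0) (f x).

(* The curve C = sqrt(-V) is a barrier for the trajectory. The point P8 lies below it
   because z > z1: z1 is the value of z at which V8 reaches the root V_sonic of
   V^2 + 3V + 1, i.e. at which C8 = 1 + V8 equals sqrt(-V8). The denominator G never
   vanishes along the trajectory and is positive at V = -2mz/(m+1), hence positive
   throughout. Up to V = -C8^2 the trajectory stays below the level C = C8, since it
   leaves P8 with negative slope and F < 0 on that level. Beyond, on the curve C^2 = -V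
   one has 2CF + G = C^2 Q(1 - C^2) / (1 - C^2) for a cubic Q that is negative on
   [1 - C8^2, 1], so the slope of the trajectory is strictly smaller than that of the
   curve wherever they meet, and the trajectory cannot cross it. Squeezing between 0
   and sqrt(-V) gives C(V) -> 0. *)

From Stdlib Require Import Reals Ranalysis5 Lra Psatz.
From Coquelicot Require Import Coquelicot.
Open Scope R_scope.

Lemma is_derive_continuity_pt (f : R -> R) x l : is_derive f x l -> continuity_pt f x.
Proof.
  intro Hd. apply continuity_pt_filterlim, (ex_derive_continuous f x). now exists l.
Qed.

Lemma is_derive_neg_secant (f : R -> R) x l : is_derive f x l -> l < 0 ->
  exists d, 0 < d /\ forall y, 0 < Rabs (y - x) < d -> (f y - f x) * (y - x) < 0.
Proof.
  intros Hd Hl. apply is_derive_Reals in Hd.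
  destruct (Hd (- l / 2)) as [d Hq]; [lra|].
  exists d. split; [apply cond_pos|]. intros y [Hy0 Hyd].
  assert (Hh : y - x <> 0) by (intro E; rewrite E, Rabs_R0 in Hy0; lra).
  specialize (Hq (y - x) Hh Hyd). replace (x + (y - x)) with y in Hq by ring.
  apply Rabs_def2 in Hq.
  assert (Hsq : 0 < (y - x) * (y - x)) by (apply Rsqr_pos_lt; exact Hh).
  replace ((f y - f x) * (y - x)) with ((f y - f x) / (y - x) * ((y - x) * (y - x)))
    by (field; exact Hh).
  nra.
Qed.

Lemma continuity_pt_neg_near (f : R -> R) x : continuity_pt f x -> f x < 0 ->
  exists d, 0 < d /\ forall y, Rabs (y - x) < d -> f y < 0.
Proof.
  intros Hc Hx. destruct (Hc (- f x)) as [d [Hd Hnear]]; [lra|].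
  exists d. split; [exact Hd|]. intros y Hy.
  destruct (Req_dec y x) as [-> | Hne]; [exact Hx|].
  assert (Hfy := Hnear y (conj (conj I (not_eq_sym Hne)) Hy)).
  unfold R_dist in Hfy. apply Rabs_def2 in Hfy. lra.
Qed.

Lemma first_root (f : R -> R) a b :
  a < b -> (forall x, a <= x <= b -> continuity_pt f x) -> f a < 0 -> 0 <= f b ->
  exists T, a < T <= b /\ f T = 0 /\ forall x, a <= x < T -> f x < 0.
Proof.
  intros Hab Hc Ha Hb.
  set (E x := a <= x <= b /\ forall y, a <= y <= x -> f y < 0).
  assert (Ea : E a) by (split; [lra | intros y Hy; replace y with a by lra; exact Ha]).
  destruct (completeness E) as [T [HT_ub HT_least]].
  { exists b. intros x [Hx _]. lra. }
  { now exists a. }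
  assert (HaT : a <= T) by now apply HT_ub.
  assert (HTb : T <= b) by (apply HT_least; intros x [Hx _]; lra).
  assert (Hbelow : forall x, a <= x < T -> f x < 0).
  { intros x Hx. destruct (Classical_Prop.classic (exists e, E e /\ x <= e))
      as [[e [[_ He] Hxe]] | Hnone].
    - apply He. lra.
    - exfalso. enough (T <= x) by lra. apply HT_least. intros e He.
      destruct (Rle_lt_dec e x) as [|Hxe]; [assumption|].
      exfalso. apply Hnone. exists e. split; [exact He | lra]. }
  assert (HcT := Hc T (conj HaT HTb)).
  exists T. destruct (Rtotal_order (f T) 0) as [Hneg | [Hzero | Hpos]].
  - exfalso. destruct (Req_dec T b) as [-> | HTb']; [lra|].
    destruct (continuity_pt_neg_near f T HcT Hneg) as [d [Hd Hnear]].
    set (e := Rmin (T + d / 2) b).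
    assert (HTe : T < e) by (unfold e; apply Rmin_glb_lt; lra).
    assert (Hed : e <= T + d / 2) by apply Rmin_l.
    enough (HEe : E e) by (assert (e <= T) by (apply HT_ub; exact HEe); lra).
    split; [split; [lra | apply Rmin_r]|].
    intros y Hy. destruct (Rlt_le_dec y T); [apply Hbelow; lra|].
    apply Hnear, Rabs_def1; lra.
  - split; [|split; [exact Hzero | exact Hbelow]].
    destruct (Req_dec T a) as [-> | ]; lra.
  - exfalso. destruct (Req_dec T a) as [-> | HTa]; [lra|].
    destruct (continuity_pt_neg_near (fun x => - f x) T (continuity_pt_opp f T HcT))
      as [d [Hd Hnear]]; [lra|].
    set (x := Rmax a (T - d / 2)).
    assert (HxT : x < T) by (unfold x; apply Rmax_lub_lt; lra).
    assert (Hxd : T - d / 2 <= x) by apply Rmax_r.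
    assert (f x < 0) by (apply Hbelow; split; [apply Rmax_l | exact HxT]).
    assert (- f x < 0) by (apply Hnear, Rabs_def1; lra). lra.
Qed.

Lemma left_of_negative_slope_root (f : R -> R) a T : a < T ->
  ex_derive f T -> f T = 0 -> Derive f T < 0 -> exists x, a <= x < T /\ 0 < f x.
Proof.
  intros HaT Hex HfT HdT.
  destruct (is_derive_neg_secant f T (Derive f T)) as [d [Hd Hs]];
    [now apply Derive_correct | exact HdT |].
  set (x := Rmax a (T - d / 2)).
  assert (HxT : x < T) by (unfold x; apply Rmax_lub_lt; lra).
  assert (Hxd : T - d / 2 <= x) by apply Rmax_r.
  exists x. split; [split; [apply Rmax_l | exact HxT]|].
  assert (Hsx := Hs x ltac:(rewrite Rabs_left; lra)). rewrite HfT in Hsx. nra.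
Qed.

Lemma negative_barrier (f : R -> R) a b : a < b ->
  (forall x, a <= x <= b -> ex_derive f x) -> f a <= 0 ->
  (forall x, a <= x <= b -> f x = 0 -> Derive f x < 0) -> f b < 0.
Proof.
  intros Hab Hex Ha Hroot.
  assert (Hstrict : forall a', a <= a' < b -> f a' < 0 -> f b < 0).
  { intros a' Ha' Hfa'. destruct (Rlt_le_dec (f b) 0) as [Hfb | Hfb]; [exact Hfb|].
    destruct (first_root f a' b) as [T [HT [HfT Hbelow]]]; [lra | | exact Hfa' | exact Hfb |].
    { intros x Hx. destruct (Hex x ltac:(lra)) as [l Hl]. exact (is_derive_continuity_pt f x l Hl). }
    destruct (left_of_negative_slope_root f a' T) as [x [Hx Hfx]];
      [lra | apply Hex; lra | exact HfT | apply Hroot; [lra | exact HfT] |].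
    assert (f x < 0) by now apply Hbelow. lra. }
  destruct (Rlt_le_dec (f a) 0) as [Hneg | Hnn]; [now apply (Hstrict a); [lra|]|].
  assert (Hfa : f a = 0) by lra.
  destruct (is_derive_neg_secant f a (Derive f a)) as [d [Hd Hs]].
  { apply Derive_correct, Hex. lra. }
  { apply Hroot; [lra | exact Hfa]. }
  set (a' := Rmin (a + d / 2) b).
  assert (Haa' : a < a') by (unfold a'; apply Rmin_glb_lt; lra).
  assert (Ha'd : a' <= a + d / 2) by apply Rmin_l.
  assert (Hfa' : f a' < 0).
  { assert (Hsa' := Hs a' ltac:(rewrite Rabs_pos_eq; lra)). rewrite Hfa in Hsa'. nra. }
  assert (Ha'b : a' <= b) by apply Rmin_r.
  destruct (Req_dec a' b) as [Heq | Hne]; [rewrite <- Heq; exact Hfa'|].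
  apply (Hstrict a'); [lra | exact Hfa'].
Qed.

Lemma continuous_nonzero_pos (f : R -> R) a b x0 :
  (forall x, a < x < b -> continuity_pt f x) -> (forall x, a < x < b -> f x <> 0) ->
  a < x0 < b -> 0 < f x0 -> forall x, a < x < b -> 0 < f x.
Proof.
  intros Hc Hnz Hx0 Hf0 x Hx.
  destruct (Rlt_le_dec 0 (f x)) as [Hpos | Hnp]; [exact Hpos | exfalso].
  assert (Hneg : f x < 0) by (assert (f x <> 0) by (apply Hnz; exact Hx); lra).
  destruct (Rtotal_order x x0) as [Hlt | [-> | Hgt]]; [| lra |].
  - destruct (IVT_interv f x x0) as [y [Hy Hfy]];
      [intros y Hy; apply Hc; lra | exact Hlt | exact Hneg | exact Hf0 |].
    apply (Hnz y); [lra | exact Hfy].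
  - destruct (IVT_interv (fun y => - f y) x0 x) as [y [Hy Hfy]];
      [intros y Hy; apply continuity_pt_opp, Hc; lra | exact Hgt | lra | lra |].
    apply (Hnz y); [lra | lra].
Qed.

Lemma filterlim_at_left0_sqrt_bound (f : R -> R) a : a < 0 ->
  (forall x, a < x < 0 -> 0 < f x < sqrt (- x)) -> filterlim f (at_left 0) (locally 0).
Proof.
  intros Ha Hbound.
  apply (filterlim_le_le (fun _ => 0) f (fun x => sqrt (- x)) 0).
  - exists (mkposreal (- a) ltac:(lra)). intros x Hx Hx0.
    cbn in Hx. unfold AbsRing_ball, abs, minus, plus, opp in Hx; cbn in Hx.
    rewrite Ropp_0, Rplus_0_r, Rabs_left in Hx by lra.
    assert (H := Hbound x ltac:(lra)). lra.
  - apply filterlim_const.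
  - assert (Hsqrt : filterlim (fun x => sqrt (- x)) (locally 0) (locally 0)).
    { replace 0 with (sqrt (- 0)) at 2 by now rewrite Ropp_0, sqrt_0.
      apply (continuity_pt_filterlim (fun x => sqrt (- x))), (continuity_pt_comp Ropp sqrt).
      - apply continuity_pt_opp, continuity_pt_id.
      - apply continuity_pt_sqrt. lra. }
    intros P HP. apply filter_le_within, Hsqrt, HP.
Qed.

Lemma is_derive_sqrt_opp x : x < 0 -> is_derive (fun y => sqrt (- y)) x (- / (2 * sqrt (- x))).
Proof.
  intros Hx. assert (0 < sqrt (- x)) by (apply sqrt_lt_R0; lra).
  auto_derive; [lra | field; lra].
Qed.

Lemma sqrt2_bounds : 1.4142 < sqrt 2 < 1.4143.
Proof. assert (H := pow2_sqrt 2 ltac:(lra)). assert (Hp := sqrt_pos 2). nra. Qed.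

Lemma sqrt5_bounds : 2.236 < sqrt 5 < 2.2361.
Proof. assert (H := pow2_sqrt 5 ltac:(lra)). assert (Hp := sqrt_pos 5). nra. Qed.

Lemma gamma_range gs g : is_gamma_star gs -> gs < g <= gamma1 -> 1 < g <= 2.4143.
Proof.
  intros [[Hgs _] _] [Hg1 Hg2]. unfold gamma1 in Hg2.
  assert (H2 := sqrt2_bounds). lra.
Qed.

Lemma z_range g z : 1 < g -> z1 g < z <= zM g -> 0 < z <= 0.175.
Proof.
  intros Hg [Hz1 Hz2]. unfold z1, zM in *.
  assert (H2 := sqrt2_bounds). assert (H5 := sqrt5_bounds).
  assert (Hsg := pow2_sqrt g ltac:(lra)). assert (Hsgp := sqrt_pos g).
  assert (Hz1p : 0 < (sqrt 5 - 1) / (2 * (1 + sqrt 5 + g))) by (apply Rdiv_lt_0_compat; lra).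
  set (X := (sqrt g + sqrt 2) ^ 2) in Hz2.
  assert (HX : 5.8 < X) by (unfold X; nra).
  assert (z * X <= 1) by (replace 1 with (/ X * X) by (field; lra); apply Rmult_le_compat_r; lra).
  split; nra.
Qed.

Lemma radicand_factor g z : 0 <= g ->
  1 - 2 * (g + 2) * z + (g - 2) ^ 2 * z ^ 2
  = ((sqrt g + sqrt 2) ^ 2 * z - 1) * ((sqrt g - sqrt 2) ^ 2 * z - 1).
Proof.
  intro Hg. assert (Hsg := pow2_sqrt g Hg). assert (Hs2 := pow2_sqrt 2 ltac:(lra)).
  replace (g - 2) with (sqrt g ^ 2 - sqrt 2 ^ 2) by lra.
  replace (g + 2) with (sqrt g ^ 2 + sqrt 2 ^ 2) by lra. ring.
Qed.

Lemma radicand_nonneg g z : 0 < g -> 0 < z <= zM g ->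
  0 <= 1 - 2 * (g + 2) * z + (g - 2) ^ 2 * z ^ 2.
Proof.
  intros Hg [Hz0 Hz]. rewrite radicand_factor by lra. unfold zM in Hz.
  assert (Hsg := sqrt_pos g). assert (Hs2 := sqrt2_bounds).
  set (X := (sqrt g + sqrt 2) ^ 2) in *. set (Y := (sqrt g - sqrt 2) ^ 2).
  assert (HX : 0 < X) by (unfold X; nra).
  assert (HYX : Y <= X) by (unfold X, Y; nra).
  assert (z * X <= 1) by (replace 1 with (/ X * X) by (field; lra); apply Rmult_le_compat_r; lra).
  assert (HYz : Y * z - 1 <= 0) by nra. nra.
Qed.

Lemma V8_root g z : 0 <= 1 - 2 * (g + 2) * z + (g - 2) ^ 2 * z ^ 2 ->
  V8 g z ^ 2 + V8 g z * (1 - (g - 2) * z) + 2 * z = 0.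
Proof. intro Hd. assert (Hw := pow2_sqrt _ Hd). unfold V8, wf. nra. Qed.

Lemma V8_lower g z : 1 < g <= 2.4143 -> 0 < z <= 0.175 -> -0.6 <= V8 g z.
Proof.
  intros Hg Hz. assert (Hw := sqrt_pos (1 - 2 * (g + 2) * z + (g - 2) ^ 2 * z ^ 2)).
  unfold V8, wf. nra.
Qed.

(* The root in (-1, 0) of V^2 + 3V + 1, where the line C = 1 + V meets the curve C^2 = -V. *)
Definition V_sonic : R := (sqrt 5 - 3) / 2.

Lemma z1_spec g z : 0 < g ->
  V_sonic ^ 2 + V_sonic * (1 - (g - 2) * z) + 2 * z = (2 - (g - 2) * V_sonic) * (z - z1 g).
Proof.
  intros Hg. unfold z1, V_sonic. assert (H5 := sqrt5_bounds).
  assert (H55 := pow2_sqrt 5 ltac:(lra)). set (s5 := sqrt 5) in *.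
  set (Vs := (s5 - 3) / 2). set (t := (s5 - 1) / (2 * (1 + s5 + g))).
  assert (E1 : (2 - (g - 2) * Vs) * t = s5 - 2).
  { replace ((2 - (g - 2) * Vs) * t) with
      ((4 * (s5 - 2) * (1 + s5 + g) - (g + 2) * (s5 ^ 2 - 5)) / (4 * (1 + s5 + g)))
      by (unfold Vs, t; field; lra).
    rewrite H55. field. lra. }
  assert (E2 : Vs ^ 2 + Vs = 2 - s5) by (unfold Vs; nra).
  assert (E : Vs ^ 2 + Vs * (1 - (g - 2) * z) + 2 * z - (2 - (g - 2) * Vs) * (z - t)
              = (Vs ^ 2 + Vs) + (2 - (g - 2) * Vs) * t) by ring.
  lra.
Qed.

Lemma V8_below_sonic g z : 1 < g <= 2.4143 -> 0 < z <= 0.175 -> z1 g < z ->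
  0 <= 1 - 2 * (g + 2) * z + (g - 2) ^ 2 * z ^ 2 -> V8 g z ^ 2 + 3 * V8 g z + 1 < 0.
Proof.
  intros Hg Hz Hz1 Hd.
  assert (Hq := V8_root g z Hd). assert (Hlow := V8_lower g z Hg Hz).
  assert (HVs := z1_spec g z ltac:(lra)).
  assert (Hw := sqrt_pos (1 - 2 * (g + 2) * z + (g - 2) ^ 2 * z ^ 2)).
  assert (Hmid : ((g - 2) * z - 1) / 2 <= V8 g z) by (unfold V8, wf; lra).
  assert (H5 := sqrt5_bounds). assert (H55 := pow2_sqrt 5 ltac:(lra)).
  set (v := V8 g z) in *. set (k := (g - 2) * z) in *. set (Vs := V_sonic) in *.
  assert (HVs_def : Vs = (sqrt 5 - 3) / 2) by reflexivity.
  assert (Hk : k <= 0.073) by (unfold k; nra).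
  assert (Hfac : Vs ^ 2 + Vs * (1 - k) + 2 * z = (Vs - v) * (Vs - (k - 1 - v))) by nra.
  assert (Hother : 0 < Vs - (k - 1 - v)) by lra.
  assert (HqVs : 0 < Vs ^ 2 + Vs * (1 - k) + 2 * z).
  { rewrite HVs. apply Rmult_lt_0_compat; [nra | lra]. }
  assert (HvVs : 0 < Vs - v) by nra.
  replace (v ^ 2 + 3 * v + 1) with (- ((Vs - v) * (v - (- 3 - sqrt 5) / 2))) by nra.
  assert (0 < v - (- 3 - sqrt 5) / 2) by lra. nra.
Qed.

Definition Qcurve (m g z u : R) : R :=
  -(1 + m * (g - 1)) * u ^ 3 + (m * g - 1 + m * z * g * (g - 2)) * u ^ 2
  + (1 - m - m * z * g * (g - 1)) * u + 2 * m * z.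

Lemma Gf_Ff_on_curve m g z s : s ^ 2 < 1 ->
  2 * s * Ff m g z (- s ^ 2) s + Gf m g z (- s ^ 2) s
  = s ^ 2 * Qcurve m g z (1 - s ^ 2) / (1 - s ^ 2).
Proof. intros Hs1. unfold Ff, Gf, Qcurve, lam, a1, a2, a3. field. lra. Qed.

Definition cofactor1 (v g : R) : R :=
  -2 + v * (-4 + 10 * g - 2 * g ^ 2) + v ^ 2 * (-2 + 17 * g - 5 * g ^ 2)
  + v ^ 3 * (10 * g - 4 * g ^ 2) + v ^ 4 * (2 * g - g ^ 2).

Definition cofactor2 (v g : R) : R :=
  -6 + 18 * g - 4 * g ^ 2 + v * (-12 + 35 * g - 10 * g ^ 2)
  + v ^ 2 * (-8 + 23 * g - 8 * g ^ 2) + v ^ 3 * (-2 + 5 * g - 2 * g ^ 2).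

Lemma Qcurve1_at_C8 v g z : Qcurve 1 g z (- v * (2 + v)) * (2 - (g - 2) * v) =
  (v ^ 2 + 3 * v + 1) * (v * cofactor1 v g)
  + (g * (g - 2) * (- v * (2 + v)) ^ 2 - g * (g - 1) * (- v * (2 + v)) + 2)
    * (v ^ 2 + v * (1 - (g - 2) * z) + 2 * z).
Proof. unfold Qcurve, cofactor1. ring. Qed.

Lemma Qcurve2_at_C8 v g z : Qcurve 2 g z (- v * (2 + v)) * (2 - (g - 2) * v) =
  (v ^ 2 + 3 * v + 1) * (v ^ 2 * cofactor2 v g)
  + (2 * g * (g - 2) * (- v * (2 + v)) ^ 2 - 2 * g * (g - 1) * (- v * (2 + v)) + 4)
    * (v ^ 2 + v * (1 - (g - 2) * z) + 2 * z).
Proof. unfold Qcurve, cofactor2. ring. Qed.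

Lemma cofactor1_neg v g : -0.6 <= v <= -0.38 -> 1 <= g <= 2.4143 -> cofactor1 v g < 0.
Proof.
  intros [Hv1 Hv2] [Hg1 Hg2]. unfold cofactor1.
  (* As a function of g the cofactor is its chord between g = 1 and g = b = 2.4143 plus
     c (g - 1) (g - b) with c >= 0, so it suffices to check the two endpoints. *)
  assert (Hc : 0 <= - v * (2 + 5 * v + 4 * v ^ 2 + v ^ 3)).
  { replace (- v * (2 + 5 * v + 4 * v ^ 2 + v ^ 3)) with ((- v) * ((v + 1) ^ 2 * (v + 2))) by ring.
    apply Rmult_le_pos; [lra | apply Rmult_le_pos; nra]. }
  assert (Hp : 0 <= (g - 1) * (2.4143 - g)) by nra.
  assert (Hv : 0 <= (v + 0.6) * (-0.38 - v)) by nra.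
  assert (Ha : -2 + 4 * v + 10 * v ^ 2 + 6 * v ^ 3 + v ^ 4 < 0) by nra.
  set (b := 2.4143) in *.
  set (Tb := -2 - 4 * v - 2 * v ^ 2 + b * (10 * v + 17 * v ^ 2 + 10 * v ^ 3 + 2 * v ^ 4)
             - b ^ 2 * (2 * v + 5 * v ^ 2 + 4 * v ^ 3 + v ^ 4)).
  assert (Hb : Tb < 0) by (unfold Tb, b; nra).
  set (Ta := -2 + 4 * v + 10 * v ^ 2 + 6 * v ^ 3 + v ^ 4) in *.
  set (c := - v * (2 + 5 * v + 4 * v ^ 2 + v ^ 3)) in *.
  replace (-2 + v * (-4 + 10 * g - 2 * g ^ 2) + v ^ 2 * (-2 + 17 * g - 5 * g ^ 2)
           + v ^ 3 * (10 * g - 4 * g ^ 2) + v ^ 4 * (2 * g - g ^ 2))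
    with ((Ta * (b - g) + Tb * (g - 1)) / (b - 1) - c * ((g - 1) * (b - g)))
    by (unfold Ta, Tb, c, b; field; lra).
  assert (Hn : Ta * (b - g) + Tb * (g - 1) < 0) by (destruct (Rle_lt_dec g 1.5); unfold b in *; nra).
  assert (Hd : 0 < / (b - 1)) by (apply Rinv_0_lt_compat; unfold b; lra).
  unfold Rdiv. nra.
Qed.

Lemma cofactor2_pos v g : -0.6 <= v <= -0.38 -> 1 <= g <= 2.4143 -> 0 < cofactor2 v g.
Proof.
  intros [Hv1 Hv2] [Hg1 Hg2]. unfold cofactor2.
  assert (Hc : 0 <= 2 * ((v + 1) ^ 2 * (v + 2))) by (apply Rmult_le_pos; [lra | apply Rmult_le_pos; nra]).
  assert (Hp : 0 <= (g - 1) * (2.4143 - g)) by nra.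
  assert (Hv : 0 <= (v + 0.6) * (-0.38 - v)) by nra.
  set (b := 2.4143) in *.
  set (Ta := 8 + 13 * v + 7 * v ^ 2 + v ^ 3).
  assert (Ha : 0 < Ta) by (unfold Ta; nra).
  set (Tb := -6 - 12 * v - 8 * v ^ 2 - 2 * v ^ 3 + b * (18 + 35 * v + 23 * v ^ 2 + 5 * v ^ 3)
             - b ^ 2 * (4 + 10 * v + 8 * v ^ 2 + 2 * v ^ 3)).
  assert (Hb : 0 < Tb) by (unfold Tb, b; nra).
  set (c := 2 * ((v + 1) ^ 2 * (v + 2))) in *.
  replace (-6 + 18 * g - 4 * g ^ 2 + v * (-12 + 35 * g - 10 * g ^ 2)
           + v ^ 2 * (-8 + 23 * g - 8 * g ^ 2) + v ^ 3 * (-2 + 5 * g - 2 * g ^ 2))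
    with ((Ta * (b - g) + Tb * (g - 1)) / (b - 1) + c * ((g - 1) * (b - g)))
    by (unfold Ta, Tb, c, b; field; lra).
  assert (Hn : 0 < Ta * (b - g) + Tb * (g - 1)) by (destruct (Rle_lt_dec g 1.5); unfold b in *; nra).
  assert (Hd : 0 < / (b - 1)) by (apply Rinv_0_lt_compat; unfold b; lra).
  unfold Rdiv. nra.
Qed.

Lemma Qcurve_secant m g z x y : Qcurve m g z x - Qcurve m g z y =
  (x - y) * (-(1 + m * (g - 1)) * (x ^ 2 + x * y + y ^ 2)
             + (m * g - 1 + m * z * g * (g - 2)) * (x + y) + (1 - m - m * z * g * (g - 1))).
Proof. unfold Qcurve. ring. Qed.

Lemma Qcurve_decreasing m g z x y : (m = 1 \/ m = 2) -> 1 <= g <= 2.4143 -> 0 <= z <= 0.175 ->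
  0.6 <= y -> y < x -> x <= 1 -> Qcurve m g z x < Qcurve m g z y.
Proof.
  intros Hm [Hg1 Hg2] [Hz1 Hz2] Hy Hyx Hx.
  assert (H3 : z * (g * (g - 2)) <= 0.1752) by (assert (g * (g - 2) <= 1.001) by nra; nra).
  assert (H4 : 0 <= z * g * (g - 1)) by (apply Rmult_le_pos; [apply Rmult_le_pos |]; lra).
  set (A := -(1 + m * (g - 1))). set (B := m * g - 1 + m * z * g * (g - 2)).
  set (Cc := 1 - m - m * z * g * (g - 1)). set (s := x + y).
  assert (HA : A < 0) by (unfold A; destruct Hm as [-> | ->]; lra).
  assert (HX : 0.75 * s ^ 2 <= x ^ 2 + x * y + y ^ 2)
    by (unfold s; pose proof (pow2_ge_0 (x - y)); nra).
  assert (HB : 1.8 * A + B < 0).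
  { unfold A, B. replace (m * z * g * (g - 2)) with (m * (z * (g * (g - 2)))) by ring.
    destruct Hm as [-> | ->]; lra. }
  assert (H12 : 1.08 * A + 1.2 * B + Cc < 0).
  { unfold A, B, Cc. replace (m * z * g * (g - 2)) with (m * (z * (g * (g - 2)))) by ring.
    replace (m * z * g * (g - 1)) with (m * (z * g * (g - 1))) by ring.
    destruct Hm as [-> | ->]; nra. }
  assert (Hbr : A * (x ^ 2 + x * y + y ^ 2) + B * (x + y) + Cc < 0).
  { assert (E : A * (3 / 4 * s ^ 2) + B * s + Cc - (27 / 25 * A + 6 / 5 * B + Cc)
                = (s - 6 / 5) * (A * (3 / 4) * (s + 6 / 5) + B)) by field.
    assert (0 <= s - 6 / 5) by (unfold s; lra).
    assert (A * (3 / 4) * (s + 6 / 5) + B <= 1.8 * A + B) by (unfold s in *; nra).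
    fold s. nra. }
  assert (Hsec := Qcurve_secant m g z x y). fold A B Cc in Hsec. nra.
Qed.

Section Trajectory.

Variables (m g z v : R).
Hypothesis Hm : m = 1 \/ m = 2.
Hypothesis Hg : 1 < g <= 2.4143.
Hypothesis Hz : 0 < z <= 0.175.
Hypothesis Hv_root : v ^ 2 + v * (1 - (g - 2) * z) + 2 * z = 0.
Hypothesis Hv_low : -0.6 <= v.
Hypothesis Hv_sonic : v ^ 2 + 3 * v + 1 < 0.

Lemma V8_upper : v <= -0.38.
Proof. nra. Qed.

Lemma Ff_level_C8_neg V : v < V < 0 -> Ff m g z V (1 + v) < 0.
Proof.
  intros [HvV HV].
  set (X := - (1 + v) ^ 2 * m * z / ((1 + V) * (1 + v)) - a1 m g * ((1 + V) + (1 + v)) + a2 m g z).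
  assert (E : Ff m g z V (1 + v)
              = (1 + v) * ((V - v) * X - m * (g - 1) / 2 * (v ^ 2 + v * (1 - (g - 2) * z) + 2 * z))).
  { unfold X, Ff, a1, a2, a3. field. split; lra. }
  rewrite E, Hv_root.
  assert (HX : X < 0).
  { unfold X, a1, a2.
    assert (0 <= (1 + v) ^ 2 * m * z / ((1 + V) * (1 + v))).
    { apply Rmult_le_pos; [| apply Rlt_le, Rinv_0_lt_compat, Rmult_lt_0_compat; lra].
      apply Rmult_le_pos; [apply Rmult_le_pos|]; [apply pow2_ge_0 | destruct Hm; lra | lra]. }
    assert (0 <= m * z * g) by (apply Rmult_le_pos; [apply Rmult_le_pos|]; destruct Hm; lra).
    assert (m * z * g * (g - 3) <= 0) by nra.
    destruct Hm as [-> | ->]; nra. }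
  assert (0 < (1 + v) * ((V - v) * - X)) by (apply Rmult_lt_0_compat; [| apply Rmult_lt_0_compat]; lra).
  lra.
Qed.

(* At V = -2mz/(m+1) the coefficient of C^2 in G vanishes. *)
Lemma Gf_pos_at_V0 C0 : 0 < Gf m g z (- 2 * m * z / (m + 1)) C0.
Proof.
  unfold Gf, lam. destruct Hm as [-> | ->].
  - replace (- 2 * 1 * z / (1 + 1)) with (- z) by field.
    replace (C0 ^ 2 * ((1 + 1) * - z + 2 * 1 * z) - - z * (1 + - z) * (1 + 1 * g * z + - z))
      with (z * (1 - z) * (1 + g * z - z)) by ring.
    apply Rmult_lt_0_compat; [apply Rmult_lt_0_compat |]; nra.
  - replace (- 2 * 2 * z / (2 + 1)) with (- (4 / 3) * z) by field.
    replace (C0 ^ 2 * ((2 + 1) * (- (4 / 3) * z) + 2 * 2 * z)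
             - - (4 / 3) * z * (1 + - (4 / 3) * z) * (1 + 2 * g * z + - (4 / 3) * z))
      with ((4 / 3 * z) * (1 - 4 / 3 * z) * (1 + 2 * g * z - 4 / 3 * z)) by field.
    apply Rmult_lt_0_compat; [apply Rmult_lt_0_compat |]; nra.
Qed.

(* -v(2+v) = 1 - (1+v)^2 is where the curve C^2 = -V meets the level C = 1 + v. *)
Lemma Qcurve_at_C8_neg : Qcurve m g z (- v * (2 + v)) < 0.
Proof.
  assert (Hv := V8_upper).
  assert (HD : 0 < 2 - (g - 2) * v) by nra.
  enough (Qcurve m g z (- v * (2 + v)) * (2 - (g - 2) * v) < 0) by nra.
  assert (Hvr : -0.6 <= v <= -0.38) by lra. assert (Hgr : 1 <= g <= 2.4143) by lra.
  destruct Hm as [-> | ->].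
  - rewrite Qcurve1_at_C8, Hv_root, Rmult_0_r, Rplus_0_r.
    assert (0 < v * cofactor1 v g) by (assert (HT := cofactor1_neg v g Hvr Hgr); nra). nra.
  - rewrite Qcurve2_at_C8, Hv_root, Rmult_0_r, Rplus_0_r.
    assert (0 < v ^ 2 * cofactor2 v g)
      by (apply Rmult_lt_0_compat; [nra | exact (cofactor2_pos v g Hvr Hgr)]). nra.
Qed.

Lemma curve_flux_neg s : 0 < s -> s ^ 2 < (1 + v) ^ 2 ->
  2 * s * Ff m g z (- s ^ 2) s + Gf m g z (- s ^ 2) s < 0.
Proof.
  intros Hs Hsv. assert (Hv := V8_upper).
  rewrite Gf_Ff_on_curve by nra.
  assert (HQ : Qcurve m g z (1 - s ^ 2) < 0).
  { assert (Hdec := Qcurve_decreasing m g z (1 - s ^ 2) (- v * (2 + v)) Hm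
                      ltac:(lra) ltac:(lra) ltac:(nra) ltac:(nra) ltac:(nra)).
    assert (H0 := Qcurve_at_C8_neg). lra. }
  assert (0 < / (1 - s ^ 2)) by (apply Rinv_0_lt_compat; nra).
  assert (s ^ 2 * Qcurve m g z (1 - s ^ 2) < 0) by (assert (0 < s ^ 2) by nra; nra).
  unfold Rdiv. nra.
Qed.

Variables (C : R -> R) (c : R).
Hypothesis HC8 : C v = 1 + v.
Hypothesis Hslope : is_derive C v c.
Hypothesis Hc : c < 0.
Hypothesis Hode : forall V, v < V < 0 ->
  Gf m g z V (C V) <> 0 /\ is_derive C V (Ff m g z V (C V) / Gf m g z V (C V)).

Lemma trajectory_Gf_pos V : v < V < 0 -> 0 < Gf m g z V (C V).
Proof.
  apply (continuous_nonzero_pos (fun x => Gf m g z x (C x)) v 0 (- 2 * m * z / (m + 1))).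
  - intros x Hx. destruct (Hode x Hx) as [_ HdC].
    assert (Hex : ex_derive (fun y => Gf m g z y (C y)) x).
    { unfold Gf. auto_derive. eexists. exact HdC. }
    destruct Hex as [l Hl]. exact (is_derive_continuity_pt _ x l Hl).
  - intros x Hx. exact (proj1 (Hode x Hx)).
  - assert (Hv := V8_upper). destruct Hm as [-> | ->]; split; apply Rminus_lt; field_simplify; lra.
  - apply Gf_pos_at_V0.
Qed.

Lemma trajectory_ex_derive x : v <= x < 0 -> ex_derive C x.
Proof.
  intros Hx. destruct (Req_dec x v) as [-> | Hne]; [now exists c|].
  eexists. apply Hode. lra.
Qed.

Lemma trajectory_Derive x : v < x < 0 -> Derive C x = Ff m g z x (C x) / Gf m g z x (C x).
Proof. intros Hx. apply is_derive_unique, Hode, Hx. Qed.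

Lemma trajectory_below_C8 V : v < V <= - (1 + v) ^ 2 -> C V < 1 + v.
Proof.
  intros HV. assert (HV0 : V < 0) by nra.
  enough (C V - (1 + v) < 0) by lra.
  apply (negative_barrier (fun x => C x - (1 + v)) v V); [lra | | lra |].
  - intros x Hx.
    exact (ex_derive_minus C (fun _ => 1 + v) x (trajectory_ex_derive x ltac:(lra)) (ex_derive_const _ x)).
  - intros x Hx Hroot. cbn in Hroot.
    rewrite Derive_minus; [| apply trajectory_ex_derive; lra | apply ex_derive_const].
    rewrite Derive_const, Rminus_0_r.
    destruct (Req_dec x v) as [-> | Hne]; [now rewrite (is_derive_unique _ _ _ Hslope)|].
    assert (HxV : v < x < 0) by lra.
    assert (HCx : C x = 1 + v) by lra.
    rewrite trajectory_Derive, HCx by exact HxV.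
    assert (HG := trajectory_Gf_pos x HxV). rewrite HCx in HG.
    apply Rdiv_neg_pos; [apply Ff_level_C8_neg; exact HxV | exact HG].
Qed.

Lemma trajectory_below_curve V : v < V < 0 -> C V < sqrt (- V).
Proof.
  intros HV. set (W := - (1 + v) ^ 2). assert (HW : W = - (1 + v) ^ 2) by reflexivity.
  assert (HvW : v < W) by nra.
  assert (HsW : sqrt (- W) = 1 + v) by (unfold W; rewrite Ropp_involutive; apply sqrt_pow2; lra).
  destruct (Rle_lt_dec V W) as [HVW | HWV].
  - assert (C V < 1 + v) by (apply trajectory_below_C8; lra).
    assert (sqrt (- W) <= sqrt (- V)) by (apply sqrt_le_1_alt; lra). lra.
  - assert (C W < 1 + v) by (apply trajectory_below_C8; lra).
    enough (C V - sqrt (- V) < 0) by lra.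
    assert (Hsq : forall x, x < 0 -> ex_derive (fun y => sqrt (- y)) x)
      by (intros x Hx; eexists; apply is_derive_sqrt_opp, Hx).
    apply (negative_barrier (fun x => C x - sqrt (- x)) W V); [lra | | |].
    + intros x Hx. exact (ex_derive_minus C (fun y => sqrt (- y)) x
                            (trajectory_ex_derive x ltac:(lra)) (Hsq x ltac:(lra))).
    + cbn. lra.
    + intros x Hx Hroot. cbn in Hroot. assert (HxV : v < x < 0) by lra.
      assert (HWx : W < x) by (destruct (Req_dec x W) as [-> | ]; lra).
      rewrite Derive_minus; [| apply trajectory_ex_derive; lra | apply Hsq; lra].
      rewrite (is_derive_unique (fun y : R => sqrt (- y)) x _ (is_derive_sqrt_opp x ltac:(lra))).
      rewrite trajectory_Derive by exact HxV.
      set (s := sqrt (- x)) in *.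
      assert (Hs : 0 < s) by (apply sqrt_lt_R0; lra).
      assert (HCx : C x = s) by lra.
      assert (Hx_s : x = - s ^ 2) by (unfold s; rewrite pow2_sqrt; lra).
      assert (HG := trajectory_Gf_pos x HxV).
      assert (Hflux : 2 * s * Ff m g z x s + Gf m g z x s < 0).
      { rewrite Hx_s. apply curve_flux_neg; [exact Hs | lra]. }
      rewrite HCx in HG |- *.
      replace (Ff m g z x s / Gf m g z x s - - / (2 * s))
        with ((2 * s * Ff m g z x s + Gf m g z x s) / (2 * s * Gf m g z x s)) by (field; lra).
      apply Rdiv_neg_pos; [exact Hflux | nra].
Qed.

End Trajectory.

Theorem mainTheorem18 (m g z gs c : R) (C : R -> R) :
  (m = 1 \/ m = 2) ->
  is_gamma_star gs ->
  gs < g <= gamma1 ->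
  z1 g < z <= zM g ->
  c < 0 -> slope_quad m g z c = 0 ->
  (forall c', c' < 0 -> slope_quad m g z c' = 0 -> c' = c) ->
  real_analytic_at C (V8 g z) ->
  C (V8 g z) = C8 g z ->
  is_derive C (V8 g z) c ->
  (forall V, V8 g z <= V < 0 -> 0 < C V) ->
  (forall V, V8 g z < V < 0 ->
     Gf m g z V (C V) <> 0 /\
     is_derive C V (Ff m g z V (C V) / Gf m g z V (C V))) ->
  (forall V, V8 g z < V < 0 -> C V < sqrt (- V)) /\
  filterlim C (at_left 0) (locally 0).
Proof.
  intros Hm Hgs Hg Hz Hc _ _ _ HC8 Hslope Hpos Hode.
  assert (Hgr := gamma_range gs g Hgs Hg).
  assert (Hzr := z_range g z ltac:(lra) Hz).
  assert (Hrad := radicand_nonneg g z ltac:(lra) ltac:(lra)).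
  assert (Hroot := V8_root g z Hrad).
  assert (Hlow := V8_lower g z Hgr Hzr).
  assert (Hsonic := V8_below_sonic g z Hgr Hzr (proj1 Hz) Hrad).
  unfold C8 in HC8.
  assert (Hbelow := trajectory_below_curve m g z (V8 g z) Hm Hgr Hzr Hroot Hlow Hsonic
                      C c HC8 Hslope Hc Hode).
  split; [exact Hbelow|].
  apply (filterlim_at_left0_sqrt_bound C (V8 g z)); [nra|].
  intros V HV. split; [apply Hpos; lra | apply Hbelow, HV].
Qed.
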